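(* For every temporal oriented tree $\mathcal T$, the connectivity graph $G$ of $\mathcal T$ contains no induced cycle of length $6$.
   Context: A temporal digraph is a pair $(D,\lambda)$ with $D=(V,A)$ a finite digraph and $\lambda:A\to 2^{\{1,\dots,t_{\max}\}}$ giving the time-steps at which each arc is active. A temporal oriented tree $\mathcal T=(T,\lambda)$ is one whose underlying digraph $T$ is an orientation of a tree. A temporal path is a sequence $(v_1,v_2,t_1),\dots,(v_{k-1},v_k,t_{k-1})$ with pairwise distinct $v_i$, $\overrightarrow{v_iv_{i+1}}\in A$, $t_i\in\lambda(\overrightarrow{v_iv_{i+1}})$ and $t_1<\dots<t_{k-1}$. Two vertices $u\ne v$ are temporally connected if there is a temporal path from $u$ to $v$ or from $v$ to $u$. The connectivity graph of $\mathcal T$ is the undirected graph $G$ with $V(G)=V(T)$ and $uv\in E(G)$ iff $u\neq v$ and $u,v$ are temporally connected. *)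

From mathcomp Require Import all_boot.
Set Implicit Arguments. Unset Strict Implicit. Unset Printing Implicit Defensive.

Definition underlying (V : finType) (A : rel V) : rel V :=
  fun x y => A x y || A y x.

(* A tree (undirected, given by a symmetric relation E): nonempty,
   connected, and without cycles (a cycle being a closed walk through
   at least 3 pairwise distinct vertices). *)
Definition is_tree (V : finType) (E : rel V) : Prop :=
  [/\ 0 < #|V|,
      (forall x y, connect E x y) &
      (forall (x : V) (p : seq V),
          uniq (x :: p) -> 2 <= size p -> path E x p -> ~~ E (last x p) x)].

Definition oriented_tree (V : finType) (A : rel V) : Prop :=
  [/\ (forall x, ~~ A x x),
      (forall x y, A x y -> ~~ A y x) &
      is_tree (underlying A)].

(* A temporal path starting at u: the list s = [(v2,t1); ...; (vk,t_{k-1})]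
   with all v_i pairwise distinct, each (v_i, v_{i+1}) an arc active at
   time t_i, and t_1 < ... < t_{k-1}. *)
Definition temporal_path (V : finType) (A : rel V) (lam : V -> V -> seq nat)
    (u : V) (s : seq (V * nat)) : bool :=
  [&& path (fun p q : V * nat => A p.1 q.1 && (q.2 \in lam p.1 q.1)) (u, 0) s,
      sorted ltn (map snd s) &
      uniq (u :: map fst s)].

Definition temporal_reach (V : finType) (A : rel V) (lam : V -> V -> seq nat)
    (u v : V) : Prop :=
  exists s, temporal_path A lam u s /\ last u (map fst s) = v.

Definition conn_edge (V : finType) (A : rel V) (lam : V -> V -> seq nat)
    (u v : V) : Prop :=
  u <> v /\ (temporal_reach A lam u v \/ temporal_reach A lam v u).

Definition induced_cycle (V : finType) (G : V -> V -> Prop) (n : nat)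
    (c : 'I_n -> V) : Prop :=
  injective c /\
  forall i j : 'I_n, i != j ->
    (G (c i) (c j) <-> (j == ordS i) || (i == ordS j)).

From mathcomp Require Import all_boot zify.
Set Implicit Arguments. Unset Strict Implicit. Unset Printing Implicit Defensive.

(* Choose a centroid y of the tree for the six cycle vertices: no branch of
   T - y contains more than three of them.  Then no four consecutive cycle
   vertices lie in one branch, so two opposite cycle edges, or three
   alternate ones, are realised by temporal paths through y.  The start of
   the path that is at y earliest can continue from y along each of the
   others (the pieces are disjoint since the tree has no directed cycle), so
   it reaches a cycle vertex it is not adjacent to on the cycle, which
   contradicts that the cycle is induced. *)

Section OrientedTree.

Variables (V : finType) (A : rel V).
Hypothesis tree_A : oriented_tree A.

Lemma underlying_sym : symmetric (underlying A).
Proof. by move=> x y; rewrite /underlying orbC. Qed.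

Lemma sub_underlying : subrel A (underlying A).
Proof. by move=> x y Axy; rewrite /underlying Axy. Qed.

Lemma underlying_neq x y : underlying A x y -> x != y.
Proof.
case: tree_A => irr _ _; apply: contraTneq => ->.
by rewrite /underlying orbb (negbTE (irr y)).
Qed.

Lemma tree_simple_path_edge y z r :
  underlying A y z -> path (underlying A) z (rcons r y) -> uniq (z :: rcons r y) ->
  r = [::].
Proof.
case: tree_A => _ _ [_ _ acyclic] Eyz.
rewrite rcons_path -rcons_cons rcons_uniq => /andP[pzr Ely] /andP[yNzr uzr].
case: r pzr Ely yNzr uzr => [//|r1 r] pzr Ely yNzr uzr.
have uyz : uniq (y :: z :: r1 :: r) by apply/andP.
have pyz : path (underlying A) y (z :: r1 :: r) by apply/andP.
by move/negP: (acyclic y _ uyz isT pyz).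
Qed.

Lemma oriented_tree_acyclic x p : path A x p -> p != [::] -> last x p != x.
Proof.
have [irr asym _] := tree_A.
case: p => [//|w q] /= /andP[Axw pwq] _; apply/eqP => qx.
case: (shortenP pwq) qx => p' pwp' uwp' _ lx.
have wx : w != x by apply: contraTneq Axw => ->; rewrite (negbTE (irr x)).
case/lastP: p' pwp' uwp' lx => [_ _ /= /eqP|r v]; first by rewrite (negbTE wx).
rewrite last_rcons => pwr uwr vx; subst v.
have Exw : underlying A x w by rewrite /underlying Axw.
have r0 := tree_simple_path_edge Exw (sub_path sub_underlying pwr) uwr.
by move: pwr; rewrite r0 /= (negbTE (asym _ _ Axw)).
Qed.

Lemma oriented_path_disjoint x p q :
  path A x p -> path A (last x p) q -> ~~ has (mem (x :: p)) q.
Proof.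
move=> pxp pq; apply/hasP => -[v vq vp].
case/splitPl: vp pxp pq => p1 p2 lv; rewrite cat_path last_cat lv => /andP[_ pvp2] pq.
case/path.splitP: vq pq => q1 q2; rewrite cat_path => /andP[pq1 _].
have ne : p2 ++ rcons q1 v != [::] by rewrite -size_eq0 size_cat size_rcons addnS.
have := oriented_tree_acyclic (x := v) (p := p2 ++ rcons q1 v).
by rewrite cat_path pvp2 pq1 last_cat last_rcons eqxx => /(_ isT ne).
Qed.

(* [avoid y] is the edge relation of the forest T - y, whose components
   are the branches of T at y. *)
Definition avoid (y : V) : rel V := fun a b => [&& underlying A a b, a != y & b != y].

Definition same_branch (y u v : V) : bool := [&& u != y, v != y & connect (avoid y) u v].

Lemma avoid_sym y : symmetric (avoid y).
Proof. by move=> a b; rewrite /avoid underlying_sym [(a != y) && _]andbC. Qed.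

Lemma same_branch_sym y u v : same_branch y u v = same_branch y v u.
Proof. by rewrite /same_branch andbCA (sym_connect_sym (@avoid_sym y)) andbA. Qed.

Lemma same_branch_trans y u v w :
  same_branch y u v -> same_branch y v w -> same_branch y u w.
Proof.
case/and3P=> uy _ cuv /and3P[_ wy cvw].
by rewrite /same_branch uy wy (connect_trans cuv cvw).
Qed.

Lemma same_branch_refl y u : u != y -> same_branch y u u.
Proof. by move=> uy; rewrite /same_branch uy connect0. Qed.

Lemma same_branch_path y x p :
  path (underlying A) x p -> y \notin x :: p -> same_branch y x (last x p).
Proof.
elim: p x => [|h p IH] x /=; first by rewrite mem_seq1 eq_sym => _; exact: same_branch_refl.
rewrite inE negb_or => /andP[Exh php] /andP[yx yhp].
apply: same_branch_trans (IH h php yhp); move: yhp; rewrite inE negb_or => /andP[yh _].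
by rewrite /same_branch eq_sym yx eq_sym yh connect1 // /avoid Exh eq_sym yx eq_sym yh.
Qed.

Lemma branch_neighbor y a : a != y -> exists2 z, underlying A y z & same_branch y z a.
Proof.
have [_ _ [_ connected _]] := tree_A.
case/connectP: (connected y a) => p pyp ->.
case: (shortenP pyp) => [[|z r]] /=; first by rewrite eqxx.
move=> /andP[Eyz pzr] /andP[yNzr _] _ _; exists z => //.
exact: same_branch_path pzr yNzr.
Qed.

(* Every edge yz of the tree is a bridge. *)
Lemma branch_cut y z v :
  underlying A y z -> same_branch y v z -> same_branch z v y -> False.
Proof.
move=> Eyz; rewrite same_branch_sym => /and3P[_ _ czv] /and3P[_ _ cvy].
pose E a b := avoid y a b || avoid z a b.
have /connectP[p pzp ly] : connect E z y.
  by apply: connect_trans (connect_sub _ czv) (connect_sub _ cvy) => a b h;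
     apply: connect1; rewrite /E h ?orbT.
case: (shortenP pzp) ly => p' pzp' uzp' _ ly.
case/lastP: p' pzp' uzp' ly => [_ _ /= zy|r w].
  by move: (underlying_neq Eyz); rewrite zy eqxx.
rewrite last_rcons => pzr uzr wy; subst w.
have EsubU : subrel E (underlying A) by move=> a b /orP[] /and3P[].
have r0 := tree_simple_path_edge Eyz (sub_path EsubU pzr) uzr.
by move: pzr; rewrite r0 /= andbT /E /avoid !eqxx !andbF.
Qed.

Lemma branch_side y z v :
  underlying A y z -> v != y -> ~~ same_branch z v y -> same_branch y v z.
Proof.
have [_ _ [_ connected _]] := tree_A.
move=> Eyz vy nzvy; case/connectP: (connected v z) => p pvp lz.
case: (shortenP pvp) lz => p' pvp' uvp' _ lz.
have [yp|yNp] := boolP (y \in v :: p'); last by rewrite lz; exact: same_branch_path pvp' yNp.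
case/splitPl: yp pvp' uvp' lz => p1 p2 ly.
rewrite cat_path -cat_cons cat_uniq last_cat ly => /andP[pvp1 _] /and3P[_ dis _] lz.
have zp2 : z \in p2.
  have := mem_last y p2; rewrite -lz inE => /orP[/eqP zy|//].
  by move: (underlying_neq Eyz); rewrite zy eqxx.
have zNp1 : z \notin v :: p1 by apply: contra dis => zp1; apply/hasP; exists z.
by move: nzvy; rewrite -ly (same_branch_path pvp1 zNp1).
Qed.

Section Centroid.

Variables (I : finType) (c : I -> V).

Definition branch_weight y a := #|[set i | same_branch y (c i) a]|.

Definition heavy y a := #|I| < (branch_weight y a).*2.

Lemma heavy_neq y a : heavy y a -> a != y.
Proof.
rewrite /heavy /branch_weight.
case: (set_0Vmem [set i | same_branch y (c i) a]) => [->|[i]]; first by rewrite cards0.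
by rewrite inE => /and3P[].
Qed.

Lemma heavy_branches_meet y a z b :
  heavy y a -> heavy z b -> exists i, same_branch y (c i) a && same_branch z (c i) b.
Proof.
rewrite /heavy /branch_weight => ha hb.
set X := [set i | _] in ha; set Y := [set i | _] in hb.
have := cardsUI X Y; have := max_card (X :|: Y).
case: (set_0Vmem (X :&: Y)) => [->|[i]]; first by rewrite cards0; lia.
by rewrite !inE => ?; exists i.
Qed.

Lemma heavy_step y a z b :
  underlying A y z -> same_branch y z a -> heavy y a -> heavy z b ->
  [set v | same_branch z v b] \proper [set v | same_branch y v a].
Proof.
move=> Eyz za ha hb.
have zNyb : ~~ same_branch z y b.
  apply/negP => zyb; have [i /andP[iya izb]] := heavy_branches_meet ha hb.
  apply: (branch_cut Eyz (v := c i)).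
  - by apply: same_branch_trans iya _; rewrite same_branch_sym.
  - by apply: same_branch_trans izb _; rewrite same_branch_sym.
apply/properP; split; last by exists z; rewrite !inE ?za // /same_branch eqxx.
apply/subsetP => v; rewrite !inE => vzb.
have vy : v != y by apply: contraNneq zNyb => <-.
have vNzy : ~~ same_branch z v y.
  by apply: contraNN zNyb => vzy; apply: same_branch_trans vzb; rewrite same_branch_sym.
exact: same_branch_trans (branch_side Eyz vy vNzy) za.
Qed.

Lemma exists_centroid : exists y, forall a, ~~ heavy y a.
Proof.
have light_or_heavy y : (exists a, heavy y a) \/ forall a, ~~ heavy y a.
  by case: (boolP [exists a, heavy y a]) => [/existsP|/existsPn]; [left|right].
suff descent n y a : #|[set v | same_branch y v a]| < n -> heavy y a ->
    exists y', forall b, ~~ heavy y' b.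
  have [_ _ [/card_gt0P[y0 _] _ _]] := tree_A.
  by case: (light_or_heavy y0) => [[a /(descent _ y0 a (ltnSn _))]|]; last exists y0.
elim: n y a => // n IH y a small ha.
have [z Eyz za] := branch_neighbor (heavy_neq ha).
case: (light_or_heavy z) => [[b hb]|]; last by exists z.
apply: (IH z b _ hb); rewrite -ltnS; apply: leq_trans small.
exact: proper_card (heavy_step Eyz za ha hb).
Qed.

End Centroid.

End OrientedTree.

Section TemporalPaths.

Variables (V : finType) (A : rel V) (lam : V -> V -> seq nat).
Hypothesis lam_pos : forall x y t, t \in lam x y -> 0 < t.
Hypothesis tree_A : oriented_tree A.

Definition tstep : rel (V * nat) :=
  fun p q => [&& A p.1 q.1, q.2 \in lam p.1 q.1 & p.2 < q.2].

Lemma path_tstep x s :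
  path tstep x s =
  path (fun p q : V * nat => A p.1 q.1 && (q.2 \in lam p.1 q.1)) x s
    && path ltn x.2 (map snd s).
Proof.
elim: s x => //= q s IH x; rewrite IH /tstep.
by case: (A _ _) (_ \in _) (_ < _) => [] [] [] //=; rewrite ?andbF.
Qed.

(* Positivity of the times makes the dummy start time 0 harmless. *)
Lemma temporal_pathE u s :
  temporal_path A lam u s = path tstep (u, 0) s && uniq (u :: map fst s).
Proof.
rewrite /temporal_path path_tstep; case: s => [|q s] //=.
have [qin|] := boolP (q.2 \in lam u q.1); last by rewrite !andbF.
by rewrite (lam_pos qin) !andbA.
Qed.

Lemma path_tstep_vertices x s : path tstep x s -> path A x.1 (map fst s).
Proof. by elim: s x => //= q s IH x /andP[/and3P[-> _ _] /IH]. Qed.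

Lemma path_tstep_delay v t t' s :
  t <= t' -> path tstep (v, t') s -> path tstep (v, t) s.
Proof.
case: s => //= q s tt' /andP[/and3P[Avq qin t'q] ->].
by rewrite /tstep /= Avq qin (leq_ltn_trans tt' t'q).
Qed.

(* [reach_via y a b t]: some temporal path from a to b visits y at time t
   (t = 0 when y = a). *)
Definition reach_via (y a b : V) (t : nat) : Prop :=
  exists s1 s2, [/\ temporal_path A lam a (s1 ++ s2),
                    last a (map fst (s1 ++ s2)) = b & last (a, 0) s1 = (y, t)].

Lemma temporal_reach_split y a b :
  temporal_reach A lam a b -> (exists t, reach_via y a b t) \/ same_branch A y a b.
Proof.
case=> s [tp <-].
have [/mapP[x xs yx] | yNs] := boolP (y \in map fst ((a, 0) :: s)).
  case/splitPl: xs tp => s1 s2 lx tp.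
  by left; exists x.2, s1, s2; rewrite lx yx; case: x {lx yx}.
right; apply: same_branch_path yNs.
move: tp; rewrite temporal_pathE => /andP[/path_tstep_vertices pA _].
exact: sub_path (@sub_underlying _ A) _ _ pA.
Qed.

(* Follow the path that reaches y first, then continue along the other one;
   the two pieces cannot meet, as that would close a directed cycle. *)
Lemma reach_via_cat y a b t a' b' t' :
  reach_via y a b t -> reach_via y a' b' t' -> t <= t' -> temporal_reach A lam a b'.
Proof.
move=> [s1 [s2 [tp1 _ l1]]] [s3 [s4 [tp2 e2 l2]]] tt'.
move: tp1 tp2; rewrite !temporal_pathE !cat_path l1 l2 !map_cat -!cat_cons !cat_uniq.
move=> /andP[/andP[ps1 _] /andP[u1 _]] /andP[/andP[_ ps4] /and3P[_ _ u4]].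
have ly : last a (map fst s1) = y by rewrite (last_map fst s1 (a, 0)) l1.
have ly' : last a' (map fst s3) = y by rewrite (last_map fst s3 (a', 0)) l2.
exists (s1 ++ s4); split; last by rewrite map_cat last_cat ly -e2 map_cat last_cat ly'.
rewrite temporal_pathE cat_path l1 ps1 (path_tstep_delay tt' ps4).
rewrite map_cat -cat_cons cat_uniq u1 u4.
have ps1A := path_tstep_vertices ps1.
by rewrite (oriented_path_disjoint tree_A ps1A) // ly (path_tstep_vertices ps4).
Qed.

Lemma reach_via_pair y a b t a' b' t' :
  reach_via y a b t -> reach_via y a' b' t' ->
  temporal_reach A lam a b' \/ temporal_reach A lam a' b.
Proof.
move=> R R'; case: (leqP t t') => [tt'|/ltnW t't].
- by left; apply: reach_via_cat R R' tt'.
- by right; apply: reach_via_cat R' R t't.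
Qed.

Lemma reach_via_triple y a1 b1 t1 a2 b2 t2 a3 b3 t3 :
  reach_via y a1 b1 t1 -> reach_via y a2 b2 t2 -> reach_via y a3 b3 t3 ->
  [\/ temporal_reach A lam a1 b2 /\ temporal_reach A lam a1 b3,
      temporal_reach A lam a2 b1 /\ temporal_reach A lam a2 b3 |
      temporal_reach A lam a3 b1 /\ temporal_reach A lam a3 b2].
Proof.
move=> R1 R2 R3.
have [[t12 t13] | [[t21 t23] | [t31 t32]]] :
  [/\ t1 <= t2 & t1 <= t3] \/ [/\ t2 <= t1 & t2 <= t3] \/ [/\ t3 <= t1 & t3 <= t2] by lia.
- by constructor 1; split; [exact: reach_via_cat R1 R2 t12 | exact: reach_via_cat R1 R3 t13].
- by constructor 2; split; [exact: reach_via_cat R2 R1 t21 | exact: reach_via_cat R2 R3 t23].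
- by constructor 3; split; [exact: reach_via_cat R3 R1 t31 | exact: reach_via_cat R3 R2 t32].
Qed.

End TemporalPaths.

Section InducedCycle.

Variables (V : finType) (A : rel V) (lam : V -> V -> seq nat) (n : nat) (c : 'I_n -> V).
Hypothesis lam_pos : forall x y t, t \in lam x y -> 0 < t.
Hypothesis cycle_c : induced_cycle (conn_edge A lam) c.

Definition far (i j : 'I_n) := [&& i != j, j != ordS i & i != ordS j].

Lemma far_sym i j : far i j = far j i.
Proof. by rewrite /far eq_sym [(j != ordS i) && _]andbC. Qed.

Lemma far_unreachable i j : far i j -> ~ temporal_reach A lam (c i) (c j).
Proof.
case: cycle_c => c_inj adj /and3P[ij jSi iSj] R.
suff /(adj i j ij).1 : conn_edge A lam (c i) (c j) by rewrite (negbTE jSi) (negbTE iSj).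
by split; [move/c_inj/eqP; rewrite (negbTE ij) | left].
Qed.

Definition edge_ends (i : 'I_n) : seq 'I_n := [:: i; ordS i].

Definition crossing y i :=
  exists p q t, [/\ p \in edge_ends i, q \in edge_ends i & reach_via A lam y (c p) (c q) t].

Lemma crossing_of_branches y i :
  ordS i != i -> ~~ same_branch A y (c i) (c (ordS i)) -> crossing y i.
Proof.
case: cycle_c => _ adj Si nsame; rewrite eq_sym in Si.
have := (adj i (ordS i) Si).2; rewrite eqxx => /(_ isT) [_ [R|R]].
- case: (temporal_reach_split lam_pos y R) => [[t Rt]|same].
    by exists i, (ordS i), t; rewrite !inE !eqxx ?orbT.
  by rewrite same in nsame.
- case: (temporal_reach_split lam_pos y R) => [[t Rt]|same].
    by exists (ordS i), i, t; rewrite !inE !eqxx ?orbT.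
  by rewrite same_branch_sym same in nsame.
Qed.

End InducedCycle.

Lemma ordS_neq n (i : 'I_n.+2) : ordS i != i.
Proof.
apply/eqP => /(congr1 val) /=; have := ltn_ord i.
rewrite leq_eqVlt => /orP[/eqP e | lt]; first by rewrite e modnn; lia.
by rewrite modn_small //; lia.
Qed.

Definition rot k (i : 'I_6) : 'I_6 := iter k (@ordS 6) i.

Lemma rot6 i : rot 6 i = i.
Proof. by apply: val_inj; case: i => [[|[|[|[|[|[|//]]]]]] ?]. Qed.

Lemma rot_mod k i : rot k i = rot (k %% 6) i.
Proof.
rewrite {1}(divn_eq k 6) /rot addnC iterD.
suff -> : iter (k %/ 6 * 6) (@ordS 6) i = i by [].
by elim: (k %/ 6) => [//|q IH]; rewrite mulSn iterD IH; exact: rot6.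
Qed.

Lemma rot_rot m k i : rot m (rot k i) = rot ((m + k) %% 6) i.
Proof. by rewrite -rot_mod /rot iterD. Qed.

Lemma uniq_ordS4 (i : 'I_6) : uniq [:: i; ordS i; ordS (ordS i); ordS (ordS (ordS i))].
Proof. by case: i => [[|[|[|[|[|[|//]]]]]] ?]. Qed.

Lemma hexagon_pattern (d : 'I_6 -> bool) :
  (forall i, [|| d i, d (ordS i) | d (ordS (ordS i))]) ->
  exists i, d i && d (rot 3 i) || [&& d i, d (rot 2 i) & d (rot 4 i)].
Proof.
pose b k := d (rot k ord0).
move=> H; have Hb k : [|| b k, b k.+1 | b k.+2] := H (rot k ord0).
have b6 : b 6 = b 0 by rewrite /b rot6.
have b7 : b 7 = b 1 by rewrite /b rot_mod.
suff : [|| b 0 && b 3, b 1 && b 4, b 2 && b 5 | [&& b 0, b 2 & b 4] || [&& b 1, b 3 & b 5]].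
  case/or4P => [hyp|hyp|hyp|/orP[hyp|hyp]];
    [exists (rot 0 ord0) | exists (rot 1 ord0) | exists (rot 2 ord0)
    | exists (rot 0 ord0) | exists (rot 1 ord0)];
    apply/orP; [left | left | left | right | right]; exact: hyp.
move: (Hb 0) (Hb 1) (Hb 2) (Hb 3) (Hb 4) (Hb 5); rewrite b6 b7.
by case: (b 0); case: (b 1); case: (b 2); case: (b 3); case: (b 4); case: (b 5).
Qed.

Lemma far_opposite i : all (fun p => all (far p) (edge_ends (rot 3 i))) (edge_ends i).
Proof. by case: i => [[|[|[|[|[|[|//]]]]]] ?]. Qed.

Lemma far_alternate i :
  all (fun p => all (far p) (edge_ends (rot 2 i)) || all (far p) (edge_ends (rot 4 i)))
      (edge_ends i).
Proof. by case: i => [[|[|[|[|[|[|//]]]]]] ?]. Qed.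

Section Hexagon.

Variables (V : finType) (A : rel V) (lam : V -> V -> seq nat) (c : 'I_6 -> V).
Hypothesis lam_pos : forall x y t, t \in lam x y -> 0 < t.
Hypothesis tree_A : oriented_tree A.
Hypothesis cycle_c : induced_cycle (conn_edge A lam) c.

Lemma hexagon_no_run y i : (forall a, ~~ heavy A c y a) ->
  ~~ [&& same_branch A y (c i) (c (ordS i)),
         same_branch A y (c (ordS i)) (c (ordS (ordS i)))
       & same_branch A y (c (ordS (ordS i))) (c (ordS (ordS (ordS i))))].
Proof.
move=> light; apply/and3P => -[s01 s12 s23].
have := light (c i); rewrite /heavy /branch_weight card_ord -leqNgt.
set X := [set j | _].
have : [:: i; ordS i; ordS (ordS i); ordS (ordS (ordS i))] \subset X.
  have s02 := same_branch_trans s01 s12; have s03 := same_branch_trans s02 s23.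
  apply/subsetP => j; rewrite !inE => /or4P[] /eqP->; rewrite 1?same_branch_sym //.
  by apply: same_branch_refl; case/and3P: s01.
move/subset_leq_card; have /card_uniqP -> := uniq_ordS4 i; rewrite /=; lia.
Qed.

Lemma crossing_opposite y i :
  crossing A lam c y i -> crossing A lam c y (rot 3 i) -> False.
Proof.
move=> [p [q [t [pi qi R]]]] [p' [q' [t' [pj qj R']]]].
have far_i := allP (far_opposite i).
case: (reach_via_pair lam_pos tree_A R R') => reach.
- exact: (far_unreachable cycle_c (allP (far_i p pi) q' qj) reach).
- have far_qp : far p' q by rewrite far_sym (allP (far_i q qi) _ pj).
  exact: (far_unreachable cycle_c far_qp reach).
Qed.

Lemma crossing_alternate y i :
  crossing A lam c y i -> crossing A lam c y (rot 2 i) -> crossing A lam c y (rot 4 i) ->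
  False.
Proof.
have no_reach_both j p q1 q2 : p \in edge_ends j -> q1 \in edge_ends (rot 2 j) ->
    q2 \in edge_ends (rot 4 j) ->
    temporal_reach A lam (c p) (c q1) -> temporal_reach A lam (c p) (c q2) -> False.
  move=> pj q1j q2j R1 R2; case/orP: (allP (far_alternate j) p pj) => /allP far_p.
  - exact: (far_unreachable cycle_c (far_p _ q1j) R1).
  - exact: (far_unreachable cycle_c (far_p _ q2j) R2).
move=> [p1 [q1 [t1 [p1i q1i R1]]]] [p2 [q2 [t2 [p2i q2i R2]]]] [p3 [q3 [t3 [p3i q3i R3]]]].
case: (reach_via_triple lam_pos tree_A R1 R2 R3) => [[r12 r13]|[r21 r23]|[r31 r32]].
- exact: no_reach_both p1i q2i q3i r12 r13.
- by apply: no_reach_both p2i _ _ r23 r21; rewrite rot_rot; [exact: q3i | exact: q1i].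
- by apply: no_reach_both p3i _ _ r31 r32; rewrite rot_rot; [exact: q1i | exact: q2i].
Qed.

End Hexagon.

Theorem mainTheorem10 (V : finType) (A : rel V) (tmax : nat)
    (lam : V -> V -> seq nat)
    (Htimes : forall x y t, t \in lam x y -> 1 <= t <= tmax)
    (Htree : oriented_tree A) :
  ~ exists c : 'I_6 -> V, induced_cycle (conn_edge A lam) c.
Proof.
move=> [c cycle_c].
have lam_pos x y t : t \in lam x y -> 0 < t by move/Htimes/andP=> [].
have [y light] := exists_centroid Htree c.
pose d i := ~~ same_branch A y (c i) (c (ordS i)).
have crossing_d i : d i -> crossing A lam c y i.
  exact: (crossing_of_branches lam_pos cycle_c (ordS_neq i)).
have [i /orP[/andP[d0 d3] | /and3P[d0 d2 d4]]] :
    exists i, d i && d (rot 3 i) || [&& d i, d (rot 2 i) & d (rot 4 i)].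
  by apply: hexagon_pattern => i; rewrite -!negb_and; exact: hexagon_no_run.
- exact: (crossing_opposite lam_pos Htree cycle_c (crossing_d _ d0) (crossing_d _ d3)).
- exact: (crossing_alternate lam_pos Htree cycle_c
    (crossing_d _ d0) (crossing_d _ d2) (crossing_d _ d4)).
Qed.
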